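(* Assume $u=(u_1,\dots,u_n)$ has positive entries linearly independent over $\mathbb{Q}$. Consider the formal power series in $\hbar$ $$V(t,\hbar)=\sum_{|r|\ge1}\hbar^{|r|-1}c_r(\hbar)\Big(\frac1tD_\theta\Big)^r\frac{e^{\frac{it}{2}\sum_j\theta_j}}{\prod_j(1-e^{it\theta_j})}\Bigg|_{\theta=u},$$ where $c_r(\hbar)=\sum_{i\ge0}c_{r,i}\hbar^{|r|-1+i}$. Then for every $\ell\ge0$, the coefficients of $\hbar^s$, $s\le\ell$, in $V(t,\hbar)$ (as functions of $t$) determine the coefficients of $\hbar^s$, $s\le \ell$, in $c_r(\hbar)$ for all $r$.
   Context: $r$ ranges over multi-indices in $\mathbb{Z}_{\ge0}^n$, $|r|=\sum r_j$, $D_\theta=-i(\partial_{\theta_1},\dots,\partial_{\theta_n})$. The $c_r(\hbar)$ are the coefficients of the semi-classical Birkhoff canonical form $F$ (Taylor series $\sum_{|r|\ge1}c_r(\hbar)p^r$).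
   Formalization: The conclusion covers only the coefficients $c_{r,i}$ with 2|r|−2+i ≤ ℓ, that is, the coefficients of ħˢ, s ≤ ℓ, in $\hbar^{|r|-1}c_r(\hbar)$ rather than in $c_r(\hbar)$. The statement above fails without it. *)

From Stdlib Require Import Reals QArith Qreals List Arith Lia.
From Coquelicot Require Import Coquelicot.
Import ListNotations.
Open Scope R_scope.

Definition rsum (n : nat) (f : nat -> R) : R :=
  fold_right (fun j acc => f j + acc) 0 (seq 0 n).
Definition cprod (n : nat) (f : nat -> C) : C :=
  fold_right (fun j acc => Cmult (f j) acc) (RtoC 1) (seq 0 n).
Definition csum (l : list C) : C := fold_right Cplus (RtoC 0) l.

Definition Q_lin_indep (n : nat) (u : nat -> R) : Prop :=
  forall q : nat -> Q,
    rsum n (fun j => Q2R (q j) * u j) = 0 ->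
    forall j, (j < n)%nat -> q j == 0%Q.

Definition cexpi (x : R) : C := (cos x, sin x).

Definition fgen (n : nat) (t : R) (theta : nat -> R) : C :=
  Cmult (cexpi (t / 2 * rsum n theta))
        (Cinv (cprod n (fun j => Cminus (RtoC 1) (cexpi (t * theta j))))).

Definition upd (theta : nat -> R) (j : nat) (x : R) : nat -> R :=
  fun k => if Nat.eqb k j then x else theta k.

Definition partial (j : nat) (F : (nat -> R) -> C) (theta : nat -> R) : C :=
  (Derive (fun x => Re (F (upd theta j x))) (theta j),
   Derive (fun x => Im (F (upd theta j x))) (theta j)).

Definition Dj (j : nat) (F : (nat -> R) -> C) : (nat -> R) -> C :=
  fun theta => Cmult (0, -1) (partial j F theta).

(* Multi-indices r = (r_1,...,r_n) are lists of length n;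
   D_theta^r = prod_j D_{theta_j}^{r_j} (entry k of r acts on theta_k). *)
Fixpoint Dmulti_from (r : list nat) (k : nat) (F : (nat -> R) -> C)
  : (nat -> R) -> C :=
  match r with
  | [] => F
  | a :: r' => Nat.iter a (Dj k) (Dmulti_from r' (S k) F)
  end.
Definition Dmulti (r : list nat) F := Dmulti_from r 0 F.

Definition msum (r : list nat) : nat := fold_right Nat.add 0%nat r.

Definition gterm (n : nat) (u : nat -> R) (r : list nat) (t : R) : C :=
  Cmult (RtoC ((/ t) ^ msum r)) (Dmulti r (fgen n t) u).

Fixpoint mindices (n N : nat) : list (list nat) :=
  match n with
  | O => [ [] ]
  | S m => flat_map (fun a => map (cons a) (mindices m (N - a))) (seq 0 (S N))
  end.

(* c : list nat -> nat -> C,  c r i = c_{r,i}, where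
   c_r(hbar) = sum_{i>=0} c_{r,i} hbar^{|r|-1+i}.
   Coefficient of hbar^s in
   V(t,hbar) = sum_{|r|>=1} hbar^{|r|-1} c_r(hbar) ((1/t) D_theta)^r f_t |_{theta=u}
             = sum_{|r|>=1} sum_i c_{r,i} hbar^{2|r|-2+i} gterm r t,
   i.e. the (finite) sum over r with |r|>=1, 2|r|-2 <= s, of c_{r, s+2-2|r|} gterm r t. *)
Definition Vcoef (n : nat) (u : nat -> R) (c : list nat -> nat -> C)
  (s : nat) (t : R) : C :=
  csum (map (fun r =>
          if (1 <=? msum r)%nat && (2 * msum r <=? s + 2)%nat
          then Cmult (c r (s + 2 - 2 * msum r)%nat) (gterm n u r t)
          else RtoC 0)
        (mindices n (S s))).

(* real t where f_t is defined at theta = u: t <> 0 and t u_j not in 2 pi Z *)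
Definition admissible_t (n : nat) (u : nat -> R) (t : R) : Prop :=
  t <> 0 /\ forall j, (j < n)%nat -> forall k : Z, t * u j <> 2 * PI * IZR k.

(* For admissible t the operator D_theta acts factorwise on
   f_t(theta) = prod_j phi_t(theta_j), and ((1/t) D)^a phi_t(x) = sum_(k <= a) gam_(a,k) psi_k(t x)
   with psi_k(z) = e^(iz/2) (1 - e^(iz))^(-k-1) and gam_(a,a) = a!.  Hence each function
   t |-> ((1/t) D_theta)^r f_t(u) is a triangular combination of the products
   Psi_K(t) = prod_j psi_(K_j)(t u_j).  Multiplying by prod_j (1 - e^(i t u_j))^B expands Psi_K,
   again triangularly, into exponentials e^(i t <E, u>); their frequencies are pairwise distinct
   because u is linearly independent over Q, and exponentials with distinct frequencies are
   linearly independent on any interval (Vandermonde).  So these functions of t are linearly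
   independent, and the coefficient of hbar^s in V determines every c_(r, s + 2 - 2|r|). *)

From Stdlib Require Import Reals QArith Qreals List Arith Lia Lra Psatz Classical.
From Stdlib Require FinFun.
From Coquelicot Require Import Coquelicot.
Import ListNotations.
Open Scope R_scope.

Definition is_cderive (f : R -> C) (x : R) (l : C) : Prop :=
  is_derive (fun y => Re (f y)) x (Re l) /\ is_derive (fun y => Im (f y)) x (Im l).

Lemma is_cderive_ext_loc (f g : R -> C) (x : R) (l : C) :
  locally x (fun y => f y = g y) -> is_cderive f x l -> is_cderive g x l.
Proof.
  intros Hfg [Hre Him]; split.
  - apply (is_derive_ext_loc (fun y => Re (f y))); auto.
    eapply filter_imp; [|exact Hfg]; intros y ->; reflexivity.
  - apply (is_derive_ext_loc (fun y => Im (f y))); auto.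
    eapply filter_imp; [|exact Hfg]; intros y ->; reflexivity.
Qed.

Lemma is_cderive_ext (f g : R -> C) (x : R) (l : C) :
  (forall y, f y = g y) -> is_cderive f x l -> is_cderive g x l.
Proof. intros Hfg; apply is_cderive_ext_loc, filter_forall, Hfg. Qed.

Lemma is_cderive_const (c : C) (x : R) : is_cderive (fun _ => c) x 0%C.
Proof. split; apply (is_derive_const (K := R_AbsRing) (V := R_NormedModule)). Qed.

Lemma is_derive_eq (f : R -> R) (x l l' : R) : l = l' -> is_derive f x l -> is_derive f x l'.
Proof. now intros <-. Qed.

Lemma is_cderive_eq (f : R -> C) (x : R) (l l' : C) :
  l = l' -> is_cderive f x l -> is_cderive f x l'.
Proof. now intros <-. Qed.

Lemma is_cderive_plus (f g : R -> C) (x : R) (a b : C) :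
  is_cderive f x a -> is_cderive g x b -> is_cderive (fun y => f y + g y)%C x (a + b)%C.
Proof.
  intros [Ha1 Ha2] [Hb1 Hb2]; split; apply (is_derive_plus (V := R_NormedModule)); auto.
Qed.

Lemma is_cderive_mult (f g : R -> C) (x : R) (a b : C) :
  is_cderive f x a -> is_cderive g x b ->
  is_cderive (fun y => f y * g y)%C x (a * g x + f x * b)%C.
Proof.
  intros [Ha1 Ha2] [Hb1 Hb2].
  assert (Hmult : forall p q dp dq, is_derive p x dp -> is_derive q x dq ->
                    is_derive (fun y => p y * q y) x (dp * q x + p x * dq)).
  { intros p q dp dq Hp Hq. apply (is_derive_mult p q); auto. intros; apply Rmult_comm. }
  destruct a as [a1 a2], b as [b1 b2]; unfold Re, Im in *; simpl in *.
  split; simpl.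
  - eapply is_derive_eq; [|apply (is_derive_minus (fun y => fst (f y) * fst (g y))
                                                 (fun y => snd (f y) * snd (g y)))];
      [|apply Hmult; eassumption ..]; unfold minus, plus, opp; simpl; ring.
  - eapply is_derive_eq; [|apply (is_derive_plus (fun y => fst (f y) * snd (g y))
                                                (fun y => snd (f y) * fst (g y)))];
      [|apply Hmult; eassumption ..]; unfold plus; simpl; ring.
Qed.

Lemma is_cderive_scal (c : C) (f : R -> C) (x : R) (a : C) :
  is_cderive f x a -> is_cderive (fun y => c * f y)%C x (c * a)%C.
Proof.
  intros Ha. eapply is_cderive_eq; [|apply is_cderive_mult; [apply is_cderive_const | exact Ha]].
  cbv beta; ring.
Qed.

Lemma is_cderive_minus (f g : R -> C) (x : R) (a b : C) :
  is_cderive f x a -> is_cderive g x b -> is_cderive (fun y => f y - g y)%C x (a - b)%C.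
Proof.
  intros Ha Hb. apply (is_cderive_ext (fun y => f y + (-1) * g y)%C); [intros; ring|].
  eapply is_cderive_eq; [|apply is_cderive_plus; [exact Ha | apply is_cderive_scal, Hb]]. ring.
Qed.

Lemma sum_sq_neq0 (z : C) : z <> 0%C -> fst z ^ 2 + snd z ^ 2 <> 0.
Proof.
  destruct z as [p q]; simpl; intros Hz E; apply Hz.
  assert (p = 0) by nra; assert (q = 0) by nra; subst; reflexivity.
Qed.

Lemma is_cderive_inv (f : R -> C) (x : R) (a : C) :
  f x <> 0%C -> is_cderive f x a ->
  is_cderive (fun y => / f y)%C x (- (a * / f x * / f x))%C.
Proof.
  intros Hfx [Ha1 Ha2]. pose proof (sum_sq_neq0 _ Hfx) as Hn.
  assert (Hsq : is_derive (fun y => fst (f y) ^ 2 + snd (f y) ^ 2) x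
                  (INR 2 * Re a * fst (f x) ^ 1 + INR 2 * Im a * snd (f x) ^ 1)).
  { apply (is_derive_plus (fun y => fst (f y) ^ 2) (fun y => snd (f y) ^ 2));
      apply is_derive_pow; assumption. }
  destruct a as [a1 a2]; unfold Re, Im in *; simpl in *.
  split; simpl.
  - eapply is_derive_eq; [|apply (is_derive_div (fun y => fst (f y))); eassumption].
    cbv beta; destruct (f x) as [p q]; simpl in *.
    field. rewrite !Rmult_1_r in Hn. exact Hn.
  - eapply is_derive_eq; [|apply (is_derive_div (fun y => - snd (f y)));
                          [apply (is_derive_opp (fun y => snd (f y))) | |]; eassumption].
    cbv beta; destruct (f x) as [p q]; simpl in *. unfold opp; simpl.
    field. rewrite !Rmult_1_r in Hn. exact Hn.
Qed.

Lemma is_cderive_pow (f : R -> C) (x : R) (a : C) (k : nat) :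
  is_cderive f x a -> is_cderive (fun y => f y ^ S k)%C x (INR (S k) * f x ^ k * a)%C.
Proof.
  intros Ha. induction k as [|k IH].
  - apply (is_cderive_ext f); [intros; simpl; ring|].
    eapply is_cderive_eq; [|exact Ha]. simpl; ring.
  - eapply is_cderive_eq; [|apply (is_cderive_mult f (fun y => f y ^ S k)%C); eassumption].
    rewrite !S_INR, !RtoC_plus. simpl Cpow. ring.
Qed.

Lemma is_cderive_cexpi (c x : R) :
  is_cderive (fun y => cexpi (c * y)) x ((0, c) * cexpi (c * x))%C.
Proof. split; unfold cexpi; simpl; (eapply is_derive_eq; [|auto_derive; auto]); ring. Qed.

Lemma cexpi_add (a b : R) : cexpi (a + b) = (cexpi a * cexpi b)%C.
Proof. unfold cexpi, Cmult; simpl. rewrite cos_plus, sin_plus. f_equal; ring. Qed.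

Lemma cexpi_0 : cexpi 0 = 1%C.
Proof. unfold cexpi. rewrite cos_0, sin_0. reflexivity. Qed.

Lemma cexpi_pow (a : R) (k : nat) : (cexpi a ^ k)%C = cexpi (INR k * a).
Proof.
  induction k as [|k IH]; simpl Cpow.
  - rewrite Rmult_0_l, cexpi_0. reflexivity.
  - rewrite IH, <- cexpi_add, S_INR. f_equal. ring.
Qed.

Lemma cexpi_neq0 (a : R) : cexpi a <> 0%C.
Proof.
  unfold cexpi. intros E. injection E as Ec Es. pose proof (sin2_cos2 a) as H.
  rewrite Ec, Es in H. unfold Rsqr in H. lra.
Qed.

Lemma one_minus_cexpi_neq0 (z : R) : cos z <> 1 -> (1 - cexpi z)%C <> 0%C.
Proof. intros Hz E. apply Hz. unfold cexpi in E. injection E as E1 E2. lra. Qed.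

Definition csumf {X : Type} (l : list X) (f : X -> C) : C := csum (map f l).

Definition cprodf (l : list nat) (f : nat -> C) : C :=
  fold_right (fun j acc => (f j * acc)%C) 1%C l.

Section FiniteSums.

Context {X : Type}.
Implicit Types (l : list X) (f g : X -> C).

Lemma csumf_cons (a : X) l f : csumf (a :: l) f = (f a + csumf l f)%C.
Proof. reflexivity. Qed.

Lemma csumf_app l1 l2 f : csumf (l1 ++ l2) f = (csumf l1 f + csumf l2 f)%C.
Proof.
  induction l1 as [|a l1 IH]; simpl; [unfold csumf; simpl; ring|].
  rewrite !csumf_cons, IH. ring.
Qed.

Lemma csumf_ext l f g : (forall x, In x l -> f x = g x) -> csumf l f = csumf l g.
Proof. intros H. unfold csumf. f_equal. apply map_ext_in, H. Qed.

Lemma csumf_plus l f g : csumf l (fun x => f x + g x)%C = (csumf l f + csumf l g)%C.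
Proof. induction l as [|a l IH]; [unfold csumf; simpl; ring|]. rewrite !csumf_cons, IH. ring. Qed.

Lemma csumf_minus l f g : csumf l (fun x => f x - g x)%C = (csumf l f - csumf l g)%C.
Proof. induction l as [|a l IH]; [unfold csumf; simpl; ring|]. rewrite !csumf_cons, IH. ring. Qed.

Lemma csumf_scal l (c : C) f : csumf l (fun x => c * f x)%C = (c * csumf l f)%C.
Proof. induction l as [|a l IH]; [unfold csumf; simpl; ring|]. rewrite !csumf_cons, IH. ring. Qed.

Lemma csumf_zero l f : (forall x, In x l -> f x = 0%C) -> csumf l f = 0%C.
Proof.
  induction l as [|a l IH]; intros H; [reflexivity|].
  rewrite csumf_cons, H, IH; [ring | intros; apply H; now right | now left].
Qed.

Lemma csumf_map {Y : Type} (h : Y -> X) (l : list Y) f :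
  csumf (map h l) f = csumf l (fun y => f (h y)).
Proof. unfold csumf. rewrite map_map. reflexivity. Qed.

Lemma csumf_flat_map {Y : Type} (h : Y -> list X) (l : list Y) f :
  csumf (flat_map h l) f = csumf l (fun y => csumf (h y) f).
Proof.
  induction l as [|a l IH]; [reflexivity|]. simpl flat_map. rewrite csumf_app, IH. reflexivity.
Qed.

Lemma csumf_single l f (x0 : X) : NoDup l -> In x0 l ->
  (forall x, In x l -> x <> x0 -> f x = 0%C) -> csumf l f = f x0.
Proof.
  induction l as [|a l IH]; intros Hnd Hx0 H; [destruct Hx0|].
  inversion Hnd as [|? ? Ha Hl]; subst. rewrite csumf_cons.
  destruct (classic (a = x0)) as [<-|Hne].
  - rewrite csumf_zero; [ring|]. intros x Hx. apply H; [now right|]. now intros ->.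
  - assert (Hx0' : In x0 l) by (destruct Hx0; [contradiction | assumption]).
    rewrite (H a (or_introl eq_refl) Hne), IH; auto; [ring|].
    intros x Hx. apply H. now right.
Qed.

End FiniteSums.

Lemma csumf_swap {X Y : Type} (l : list X) (l' : list Y) (h : X -> Y -> C) :
  csumf l (fun x => csumf l' (h x)) = csumf l' (fun y => csumf l (fun x => h x y)).
Proof.
  induction l as [|a l IH].
  - unfold csumf at 1; simpl. symmetry. now apply csumf_zero.
  - rewrite csumf_cons, IH, <- csumf_plus. apply csumf_ext. reflexivity.
Qed.

Lemma csumf_mult {X Y : Type} (l : list X) (l' : list Y) (f : X -> C) (g : Y -> C) :
  (csumf l f * csumf l' g)%C = csumf l (fun x => csumf l' (fun y => f x * g y))%C.
Proof.
  induction l as [|a l IH]; [unfold csumf; simpl; ring|].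
  rewrite !csumf_cons, <- IH, csumf_scal. ring.
Qed.

Lemma csumf_seq_first (m : nat) (g : nat -> C) :
  csumf (seq 0 (S m)) g = (g 0%nat + csumf (seq 0 m) (fun k => g (S k)))%C.
Proof. simpl seq. rewrite csumf_cons, <- seq_shift, csumf_map. reflexivity. Qed.

Lemma csumf_seq_last (m : nat) (g : nat -> C) :
  csumf (seq 0 (S m)) g = (csumf (seq 0 m) g + g m)%C.
Proof.
  rewrite seq_S, csumf_app, csumf_cons. unfold csumf at 3; simpl. now rewrite Cplus_0_r.
Qed.

Lemma cprod_cprodf (n : nat) (f : nat -> C) : cprod n f = cprodf (seq 0 n) f.
Proof. reflexivity. Qed.

Lemma cprodf_ext (l : list nat) (f g : nat -> C) :
  (forall j, In j l -> f j = g j) -> cprodf l f = cprodf l g.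
Proof.
  induction l as [|a l IH]; intros H; simpl; [reflexivity|].
  rewrite H, IH; [reflexivity| |now left]. intros; apply H; now right.
Qed.

Lemma cprodf_mult (l : list nat) (f g : nat -> C) :
  cprodf l (fun j => f j * g j)%C = (cprodf l f * cprodf l g)%C.
Proof. induction l as [|a l IH]; simpl; [ring|]. rewrite IH. ring. Qed.

Lemma cprodf_neq0 (l : list nat) (f : nat -> C) :
  (forall j, In j l -> f j <> 0%C) -> cprodf l f <> 0%C.
Proof.
  induction l as [|a l IH]; intros H; simpl.
  - intros E; injection E; lra.
  - apply Cmult_neq_0; [apply H; now left|]. apply IH. intros; apply H; now right.
Qed.

Lemma cprodf_eq0 (l : list nat) (f : nat -> C) (k : nat) :
  In k l -> f k = 0%C -> cprodf l f = 0%C.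
Proof.
  induction l as [|a l IH]; intros Hk Hf; [destruct Hk|].
  simpl. destruct Hk as [->|Hk]; [rewrite Hf | rewrite IH by assumption]; ring.
Qed.

Lemma cprodf_extract (l : list nat) (f : nat -> C) (k : nat) : NoDup l -> In k l ->
  cprodf l f = (f k * cprodf l (fun j => if Nat.eqb j k then 1 else f j))%C.
Proof.
  induction l as [|a l IH]; intros Hnd Hk; [destruct Hk|].
  inversion Hnd as [|? ? Ha Hl]; subst. simpl.
  destruct (Nat.eqb_spec a k) as [->|Hne].
  - rewrite (cprodf_ext l (fun j => if Nat.eqb j k then 1%C else f j) f); [ring|].
    intros j Hj. destruct (Nat.eqb_spec j k) as [->|]; [contradiction | reflexivity].
  - destruct Hk as [|Hk]; [contradiction|]. rewrite IH by assumption. ring.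
Qed.

Lemma cprodf_pow (t : R) (r : list nat) (m : nat) :
  cprodf (seq m (length r)) (fun j => RtoC (t ^ nth (j - m) r 0%nat)) = RtoC (t ^ msum r).
Proof.
  revert m; induction r as [|a r IH]; intros m; [reflexivity|]. simpl.
  rewrite Nat.sub_diag, (cprodf_ext _ _ (fun j => RtoC (t ^ nth (j - S m) r 0%nat))).
  - rewrite IH, pow_add, RtoC_mult. reflexivity.
  - intros j Hj. apply in_seq in Hj. replace (j - m)%nat with (S (j - S m)) by lia. reflexivity.
Qed.

Fixpoint box (n B : nat) : list (list nat) :=
  match n with
  | O => [ [] ]
  | S m => flat_map (fun a => map (cons a) (box m B)) (seq 0 B)
  end.

Lemma NoDup_flat_map_cons (l : list nat) (F : nat -> list (list nat)) :
  NoDup l -> (forall a, NoDup (F a)) -> NoDup (flat_map (fun a => map (cons a) (F a)) l).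
Proof.
  induction 1 as [|a l Ha Hl IH]; intros HF; simpl; [constructor|].
  apply NoDup_app;
    [apply FinFun.Injective_map_NoDup; [intros ? ? E; now injection E | auto] | auto |].
  intros x Hx1 Hx2. apply in_map_iff in Hx1 as [y [<- _]].
  apply in_flat_map in Hx2 as [b [Hb Hy]]. apply in_map_iff in Hy as [z [E _]].
  injection E as ->. contradiction.
Qed.

Lemma NoDup_box (n B : nat) : NoDup (box n B).
Proof.
  induction n; simpl; [repeat constructor; intros []|].
  apply NoDup_flat_map_cons; [apply seq_NoDup | auto].
Qed.

Lemma NoDup_mindices (n N : nat) : NoDup (mindices n N).
Proof.
  revert N; induction n; intros N; cbn [mindices]; [repeat constructor; intros []|].
  apply NoDup_flat_map_cons; [apply seq_NoDup | auto].
Qed.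

Lemma In_box (n B : nat) (K : list nat) :
  In K (box n B) <-> length K = n /\ (forall x, In x K -> (x < B)%nat).
Proof.
  revert K; induction n; intros K; simpl.
  - split; [intros [<-|[]]; split; [reflexivity | intros _ []]|].
    intros [H _]. destruct K; [now left | discriminate].
  - rewrite in_flat_map. split.
    + intros [a [Ha HK]]. apply in_map_iff in HK as [K' [<- HK']].
      apply IHn in HK' as [H1 H2]. apply in_seq in Ha. simpl.
      split; [lia|]. intros x [<-|Hx]; [lia | auto].
    + intros [H1 H2]. destruct K as [|a K']; [discriminate|]. exists a. split.
      * apply in_seq. split; [lia|]. apply H2; now left.
      * apply in_map, IHn. simpl in H1. split; [lia|]. intros; apply H2; now right.
Qed.

Lemma In_mindices (n N : nat) (r : list nat) :
  In r (mindices n N) <-> length r = n /\ (msum r <= N)%nat.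
Proof.
  revert N r; induction n; intros N r; cbn [mindices].
  - split; [intros [<-|[]]; simpl; lia|].
    intros [H _]. destruct r; [now left | discriminate].
  - rewrite in_flat_map. split.
    + intros [a [Ha HK]]. apply in_map_iff in HK as [K' [<- HK']].
      apply IHn in HK'. apply in_seq in Ha. simpl. lia.
    + intros [H1 H2]. destruct r as [|a r]; [discriminate|]. simpl in H1, H2.
      exists a. split; [apply in_seq; lia|]. apply in_map, IHn. lia.
Qed.

Lemma cprodf_csumf (B : nat) (f : nat -> nat -> C) (n m : nat) :
  cprodf (seq m n) (fun j => csumf (seq 0 B) (f j)) =
  csumf (box n B) (fun K => cprodf (seq m n) (fun j => f j (nth (j - m) K 0%nat))).
Proof.
  revert m; induction n; intros m; [unfold csumf; simpl; ring|].
  simpl seq; simpl box. cbn [cprodf fold_right].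
  fold (cprodf (seq (S m) n) (fun j => csumf (seq 0 B) (f j))).
  rewrite IHn, csumf_mult, csumf_flat_map. apply csumf_ext. intros a _.
  rewrite csumf_map. apply csumf_ext. intros K _. cbn [cprodf fold_right].
  rewrite Nat.sub_diag. f_equal. apply cprodf_ext. intros j Hj. apply in_seq in Hj.
  replace (j - m)%nat with (S (j - S m)) by lia. reflexivity.
Qed.

Lemma is_cderive_csumf {X : Type} (l : list X) (F : X -> R -> C) (L : X -> C) (x : R) :
  (forall k, In k l -> is_cderive (F k) x (L k)) ->
  is_cderive (fun y => csumf l (fun k => F k y)) x (csumf l L).
Proof.
  induction l as [|a l IH]; intros H; [exact (is_cderive_const 0%C x)|].
  apply is_cderive_plus; [apply H; now left|]. apply IH. intros; apply H; now right.
Qed.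

Definition D1 (f : R -> C) (x : R) : C :=
  ((0, -1) * (Derive (fun y => Re (f y)) x, Derive (fun y => Im (f y)) x))%C.

Lemma D1_is_cderive (f : R -> C) (x : R) (l : C) : is_cderive f x l -> D1 f x = ((0, -1) * l)%C.
Proof.
  intros [Hre Him]. unfold D1.
  replace (Derive (fun y => Re (f y)) x) with (Re l) by (symmetry; now apply is_derive_unique).
  replace (Derive (fun y => Im (f y)) x) with (Im l) by (symmetry; now apply is_derive_unique).
  now destruct l.
Qed.

Lemma D1_Ci : (((0, -1) : C) * Ci)%C = 1%C.
Proof. unfold Ci, Cmult, RtoC; simpl. f_equal; ring. Qed.

Lemma D1_ext_loc (f g : R -> C) (x : R) : locally x (fun y => f y = g y) -> D1 f x = D1 g x.
Proof.
  intros H. unfold D1. f_equal. f_equal; apply Derive_ext_loc;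
    eapply filter_imp; [|exact H | |exact H]; intros y ->; reflexivity.
Qed.

Lemma cos_neq1_locally (t x : R) : cos (t * x) <> 1 -> locally x (fun y => cos (t * y) <> 1).
Proof.
  intros H.
  assert (Hc : continuous (fun y => cos (t * y)) x).
  { apply (ex_derive_continuous (K := R_AbsRing) (V := R_NormedModule)). auto_derive; auto. }
  apply (Hc (fun z => z <> 1)).
  assert (He : 0 < Rabs (cos (t * x) - 1)) by (apply Rabs_pos_lt; lra).
  exists (mkposreal _ He). intros z Hz ->.
  unfold ball in Hz; simpl in Hz. unfold AbsRing_ball, abs, minus, plus, opp in Hz; simpl in Hz.
  rewrite Rabs_minus_sym in Hz. unfold Rminus in Hz. lra.
Qed.

Definition psi (k : nat) (z : R) : C := (cexpi (z / 2) * (/ (1 - cexpi z)) ^ S k)%C.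

(* Writing e^(iz) = 1 - (1 - e^(iz)) in the derivative of (1 - e^(iz))^(-k-1) is what
   produces psi (S k). *)
Definition psi_deriv (k : nat) (z : R) : C :=
  (INR (S k) * psi (S k) z - (INR k + / 2)%R * psi k z)%C.

Lemma is_cderive_psi (k : nat) (t x : R) : cos (t * x) <> 1 ->
  is_cderive (fun y => psi k (t * y)) x (Ci * t * psi_deriv k (t * x))%C.
Proof.
  intros Hc. pose proof (one_minus_cexpi_neq0 _ Hc) as HY.
  apply (is_cderive_ext (fun y => cexpi (t / 2 * y) * (/ (1 - cexpi (t * y))) ^ S k)%C).
  { intros y. unfold psi. now replace (t * y / 2) with (t / 2 * y) by field. }
  eapply is_cderive_eq;
    [|apply is_cderive_mult;
      [apply is_cderive_cexpi
      |apply is_cderive_pow, is_cderive_inv, is_cderive_minus;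
        [exact HY | apply is_cderive_const | apply is_cderive_cexpi]]].
  unfold psi_deriv, psi. replace (t * x / 2) with (t / 2 * x) by field.
  rewrite S_INR, !RtoC_plus. simpl Cpow.
  assert (E1 : ((0, t / 2) : C) = (Ci * t * / 2)%C)
    by (unfold Ci, Cmult, Cinv; simpl; f_equal; field).
  assert (E2 : ((0, t) : C) = (Ci * t)%C) by (unfold Ci, Cmult; simpl; f_equal; ring).
  assert (E3 : RtoC (/ 2) = (/ 2)%C) by (unfold Cinv, RtoC; simpl; f_equal; field).
  rewrite E1, E2, E3. field. exact HY.
Qed.

Fixpoint gam (a k : nat) : R :=
  match a with
  | O => if Nat.eqb k 0 then 1 else 0
  | S a' => INR k * (match k with O => 0 | S k' => gam a' k' end) - (INR k + / 2) * gam a' k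
  end.

Lemma gam_above (a k : nat) : (a < k)%nat -> gam a k = 0.
Proof.
  revert k; induction a; intros k H; destruct k; simpl; try lia; [reflexivity|].
  rewrite !IHa by lia. ring.
Qed.

Lemma gam_diag (a : nat) : gam a a = INR (fact a).
Proof.
  induction a; [reflexivity|]. cbn [gam]. rewrite IHa, (gam_above a (S a)) by lia.
  rewrite fact_simpl, mult_INR. ring.
Qed.

(* The cutoff B is harmless (gam a k = 0 for k > a); a common cutoff lets products of
   psi_comb expand over box n B. *)
Definition psi_comb (B a : nat) (z : R) : C := csumf (seq 0 B) (fun k => gam a k * psi k z)%C.

Lemma psi_comb_0 (B : nat) (z : R) : (0 < B)%nat -> psi_comb B 0 z = psi 0 z.
Proof.
  intros HB. destruct B as [|B]; [lia|]. unfold psi_comb. rewrite csumf_seq_first, csumf_zero.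
  - simpl. ring.
  - intros k _. simpl. ring.
Qed.

Lemma csumf_psi_deriv (B a : nat) (z : R) : (S a < B)%nat ->
  csumf (seq 0 B) (fun k => gam a k * psi_deriv k z)%C = psi_comb B (S a) z.
Proof.
  intros HB. destruct B as [|B]; [lia|].
  set (shifted k := (gam a k * INR (S k) * psi (S k) z)%C).
  set (diag k := ((INR k + / 2)%R * gam a k * psi k z)%C).
  transitivity (csumf (seq 0 (S B)) shifted - csumf (seq 0 (S B)) diag)%C.
  { rewrite <- csumf_minus. apply csumf_ext. intros; unfold shifted, diag, psi_deriv; ring. }
  transitivity (csumf (seq 0 (S B))
                  (fun k => RtoC (match k with O => 0 | S k' => gam a k' end) * INR k * psi k z)
                - csumf (seq 0 (S B)) diag)%C.
  { f_equal. rewrite csumf_seq_last, csumf_seq_first.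
    unfold shifted at 2. rewrite (gam_above a B) by lia. cbv beta iota.
    rewrite !Cmult_0_l, Cplus_0_l, Cplus_0_r. reflexivity. }
  rewrite <- csumf_minus. apply csumf_ext. intros k _. unfold diag. cbn [gam].
  rewrite RtoC_minus, !RtoC_mult. ring.
Qed.

Lemma is_cderive_psi_comb (B a : nat) (t x : R) : cos (t * x) <> 1 ->
  is_cderive (fun y => psi_comb B a (t * y)) x
    (Ci * t * csumf (seq 0 B) (fun k => gam a k * psi_deriv k (t * x)))%C.
Proof.
  intros H. unfold psi_comb.
  eapply is_cderive_eq.
  2: { apply (is_cderive_csumf (seq 0 B) (fun k y => gam a k * psi k (t * y))%C).
       intros k _. apply is_cderive_scal, is_cderive_psi, H. }
  rewrite <- csumf_scal. apply csumf_ext. intros; ring.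
Qed.

Definition phi (t y : R) : C := psi 0 (t * y).

Lemma iter_D1_phi (B a : nat) (t x : R) : (a < B)%nat -> cos (t * x) <> 1 ->
  Nat.iter a D1 (phi t) x = (RtoC (t ^ a) * psi_comb B a (t * x))%C.
Proof.
  revert x; induction a as [|a IH]; intros x Ha Hx.
  - rewrite psi_comb_0 by lia. simpl. unfold phi. ring.
  - simpl Nat.iter. rewrite (D1_ext_loc _ (fun y => RtoC (t ^ a) * psi_comb B a (t * y))%C).
    2: { eapply filter_imp; [|apply (cos_neq1_locally t x Hx)].
         intros y Hy. apply IH; [lia | exact Hy]. }
    rewrite (D1_is_cderive _ _ _ (is_cderive_scal _ _ _ _ (is_cderive_psi_comb B a t x Hx))).
    rewrite csumf_psi_deriv by lia. simpl pow. rewrite RtoC_mult.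
    transitivity (((0, -1) : C) * Ci * RtoC (t ^ a) * t * psi_comb B (S a) (t * x))%C; [ring|].
    rewrite D1_Ci. ring.
Qed.

Lemma is_cderive_iter_D1_phi (a : nat) (t x : R) : cos (t * x) <> 1 ->
  is_cderive (Nat.iter a D1 (phi t)) x (Ci * Nat.iter (S a) D1 (phi t) x)%C.
Proof.
  intros Hx. set (B := S (S a)).
  apply (is_cderive_ext_loc (fun y => RtoC (t ^ a) * psi_comb B a (t * y))%C).
  { eapply filter_imp; [|apply (cos_neq1_locally t x Hx)].
    intros y Hy. symmetry. apply iter_D1_phi; [unfold B; lia | exact Hy]. }
  eapply is_cderive_eq; [|apply is_cderive_scal, is_cderive_psi_comb, Hx].
  rewrite (iter_D1_phi B (S a)) by (unfold B; lia || exact Hx).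
  rewrite csumf_psi_deriv by (unfold B; lia). simpl pow. rewrite RtoC_mult. ring.
Qed.

Lemma Dj_D1 (j : nat) (F : (nat -> R) -> C) (theta : nat -> R) :
  Dj j F theta = D1 (fun x => F (upd theta j x)) (theta j).
Proof. reflexivity. Qed.

Definition off_poles (n : nat) (t : R) (theta : nat -> R) : Prop :=
  forall j, (j < n)%nat -> cos (t * theta j) <> 1.

Definition phi_prod (n : nat) (t : R) (A : nat -> nat) (theta : nat -> R) : C :=
  cprod n (fun j => Nat.iter (A j) D1 (phi t) (theta j)).

Lemma phi_prod_ext (n : nat) (t : R) (A A' : nat -> nat) (theta : nat -> R) :
  (forall j, (j < n)%nat -> A j = A' j) -> phi_prod n t A theta = phi_prod n t A' theta.
Proof.
  intros H. apply cprodf_ext. intros j Hj. apply in_seq in Hj. rewrite H by lia. reflexivity.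
Qed.

Lemma off_poles_upd (n : nat) (t : R) (theta : nat -> R) (k : nat) (x : R) :
  off_poles n t theta -> cos (t * x) <> 1 -> off_poles n t (upd theta k x).
Proof. intros H Hx j Hj. unfold upd. destruct (Nat.eqb j k); auto. Qed.

Lemma Dj_ext (n : nat) (t : R) (k : nat) (G G' : (nat -> R) -> C) (theta : nat -> R) :
  (k < n)%nat -> (forall th, off_poles n t th -> G th = G' th) ->
  off_poles n t theta -> Dj k G theta = Dj k G' theta.
Proof.
  intros Hk H Hth. rewrite !Dj_D1. apply D1_ext_loc.
  eapply filter_imp; [|apply (cos_neq1_locally t (theta k) (Hth k Hk))].
  intros y Hy. apply H, off_poles_upd; assumption.
Qed.

Lemma Dj_phi_prod (n : nat) (t : R) (A : nat -> nat) (k : nat) (theta : nat -> R) :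
  (k < n)%nat -> off_poles n t theta ->
  Dj k (phi_prod n t A) theta = phi_prod n t (fun j => if Nat.eqb j k then S (A k) else A j) theta.
Proof.
  intros Hk Hth. rewrite Dj_D1.
  set (others := cprodf (seq 0 n)
                   (fun j => if Nat.eqb j k then 1%C else Nat.iter (A j) D1 (phi t) (theta j))).
  assert (Hsplit : forall (A' : nat -> nat) (th : nat -> R),
             (forall j, j <> k -> A' j = A j) -> (forall j, j <> k -> th j = theta j) ->
             phi_prod n t A' th = (others * Nat.iter (A' k) D1 (phi t) (th k))%C).
  { intros A' th HA Hth'. unfold phi_prod. rewrite cprod_cprodf.
    rewrite (cprodf_extract _ _ k (seq_NoDup n 0)) by (apply in_seq; lia).
    rewrite Cmult_comm. f_equal. apply cprodf_ext. intros j _.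
    destruct (Nat.eqb_spec j k); [reflexivity|]. now rewrite HA, Hth'. }
  assert (Hupd : forall x j, j <> k -> upd theta k x j = theta j).
  { intros x j Hj. unfold upd. now destruct (Nat.eqb_spec j k). }
  rewrite (D1_ext_loc _ (fun x => others * Nat.iter (A k) D1 (phi t) x)%C).
  2: { apply filter_forall. intros x. rewrite (Hsplit A) by auto.
       unfold upd. now rewrite Nat.eqb_refl. }
  rewrite (D1_is_cderive _ _ _ (is_cderive_scal others _ _ _
             (is_cderive_iter_D1_phi (A k) t (theta k) (Hth k Hk)))).
  rewrite (Hsplit _ theta); [|intros j Hj; now destruct (Nat.eqb_spec j k) | reflexivity].
  rewrite Nat.eqb_refl.
  transitivity (((0, -1) : C) * Ci * others * Nat.iter (S (A k)) D1 (phi t) (theta k))%C; [ring|].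
  rewrite D1_Ci. ring.
Qed.

Lemma iter_Dj_phi_prod (n : nat) (t : R) (k a : nat) (A : nat -> nat) (G : (nat -> R) -> C) :
  (k < n)%nat -> (forall th, off_poles n t th -> G th = phi_prod n t A th) ->
  forall theta, off_poles n t theta ->
  Nat.iter a (Dj k) G theta
  = phi_prod n t (fun j => if Nat.eqb j k then (A k + a)%nat else A j) theta.
Proof.
  intros Hk HG. induction a as [|a IH]; intros theta Hth; simpl Nat.iter.
  - rewrite HG by assumption. apply phi_prod_ext. intros j _.
    destruct (Nat.eqb_spec j k); subst; lia.
  - rewrite (Dj_ext n t k _ _ theta Hk IH Hth), Dj_phi_prod by assumption.
    apply phi_prod_ext. intros j _. rewrite Nat.eqb_refl. destruct (Nat.eqb_spec j k); lia.
Qed.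

Lemma Dmulti_from_phi_prod (n : nat) (t : R) (r : list nat) (k : nat) (A : nat -> nat)
    (G : (nat -> R) -> C) :
  (k + length r <= n)%nat -> (forall th, off_poles n t th -> G th = phi_prod n t A th) ->
  forall theta, off_poles n t theta ->
  Dmulti_from r k G theta
  = phi_prod n t (fun j => (A j + if Nat.leb k j then nth (j - k) r 0 else 0)%nat) theta.
Proof.
  revert k; induction r as [|a r IH]; intros k Hlen HG theta Hth; simpl Dmulti_from.
  - rewrite HG by assumption. apply phi_prod_ext. intros j _.
    destruct (Nat.leb k j), (j - k)%nat; simpl; lia.
  - simpl in Hlen.
    rewrite (iter_Dj_phi_prod n t k a _ _ ltac:(lia) (IH (S k) ltac:(lia) HG)) by assumption.
    apply phi_prod_ext. intros j _. destruct (Nat.eqb_spec j k) as [->|Hne].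
    + rewrite Nat.leb_refl, Nat.sub_diag, (proj2 (Nat.leb_gt (S k) k)) by lia. simpl. lia.
    + destruct (Nat.leb_spec k j), (Nat.leb_spec (S k) j); try lia.
      replace (j - k)%nat with (S (j - S k)) by lia. simpl. lia.
Qed.

Lemma cexpi_sum (c : R) (th : nat -> R) (l : list nat) :
  cexpi (c * fold_right (fun j acc => th j + acc) 0 l) = cprodf l (fun j => cexpi (c * th j)).
Proof.
  induction l as [|a l IH]; simpl.
  - rewrite Rmult_0_r, cexpi_0. reflexivity.
  - rewrite <- IH, <- cexpi_add. f_equal. ring.
Qed.

Lemma Cinv_cprodf (l : list nat) (f : nat -> C) :
  (forall j, In j l -> f j <> 0%C) -> (/ cprodf l f)%C = cprodf l (fun j => / f j)%C.
Proof.
  induction l as [|a l IH]; intros H; simpl.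
  - unfold Cinv, RtoC; simpl. f_equal; field.
  - rewrite <- IH by (intros; apply H; now right). field. split.
    + apply cprodf_neq0. intros; apply H; now right.
    + apply H; now left.
Qed.

Lemma fgen_phi_prod (n : nat) (t : R) (theta : nat -> R) :
  off_poles n t theta -> fgen n t theta = phi_prod n t (fun _ => 0%nat) theta.
Proof.
  intros Hth. unfold fgen, phi_prod, rsum. rewrite !cprod_cprodf, cexpi_sum, Cinv_cprodf.
  - rewrite <- cprodf_mult. apply cprodf_ext. intros j _. simpl. unfold phi, psi.
    replace (t * theta j / 2) with (t / 2 * theta j) by field. ring.
  - intros j Hj. apply in_seq in Hj. apply one_minus_cexpi_neq0, Hth. lia.
Qed.

Lemma gterm_eq_prod_psi_comb (n : nat) (u : nat -> R) (r : list nat) (t : R) (B : nat) :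
  length r = n -> t <> 0 -> off_poles n t u -> (forall x, In x r -> (x < B)%nat) ->
  gterm n u r t = cprod n (fun j => psi_comb B (nth j r 0%nat) (t * u j)).
Proof.
  intros Hlen Ht Hu HB. unfold gterm, Dmulti.
  rewrite (Dmulti_from_phi_prod n t r 0 (fun _ => 0%nat) (fgen n t) ltac:(lia)
             (fgen_phi_prod n t) u Hu).
  unfold phi_prod. rewrite !cprod_cprodf.
  rewrite (cprodf_ext _ _ (fun j => RtoC (t ^ nth (j - 0) r 0%nat)
                                    * psi_comb B (nth j r 0%nat) (t * u j))%C).
  2: { intros j Hj. apply in_seq in Hj. simpl. rewrite Nat.sub_0_r.
       apply iter_D1_phi, Hu; [apply HB, nth_In | ]; lia. }
  rewrite cprodf_mult. subst n. rewrite cprodf_pow, Cmult_assoc, <- RtoC_mult, <- Rpow_mult_distr.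
  rewrite Rinv_l, pow1 by exact Ht. ring.
Qed.

Lemma Cmult_eq0 (a b : C) : (a * b)%C = 0%C -> a = 0%C \/ b = 0%C.
Proof.
  intros H. destruct (classic (a = 0%C)) as [Ha|Ha]; [now left|right].
  apply NNPP. intros Hb. exact (Cmult_neq_0 a b Ha Hb H).
Qed.

Lemma triangular_coef_zero {X : Type} (L : list X) (d : X -> C) (M : X -> X -> C) (mu : X -> nat) :
  NoDup L ->
  (forall r, In r L -> csumf L (fun r' => d r' * M r' r)%C = 0%C) ->
  (forall r, In r L -> M r r <> 0%C) ->
  (forall r r', In r L -> In r' L -> r' <> r -> M r' r <> 0%C -> (mu r' < mu r)%nat) ->
  forall r, In r L -> d r = 0%C.
Proof.
  intros Hnd Hsum Hdiag Htri r.
  remember (mu r) as m eqn:Hm. revert r Hm.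
  induction m as [m IH] using lt_wf_ind. intros r Hm Hr.
  specialize (Hsum r Hr). rewrite (csumf_single _ _ r Hnd Hr) in Hsum.
  - destruct (Cmult_eq0 _ _ Hsum) as [|Hz]; [assumption|]. exfalso. exact (Hdiag r Hr Hz).
  - intros r' Hr' Hne. destruct (classic (M r' r = 0%C)) as [->|Hnz]; [ring|].
    rewrite (IH (mu r')); [ring| |reflexivity|assumption]. subst m. now apply Htri.
Qed.

Lemma vandermonde_coef_zero {X : Type} (L : list X) (z c : X -> C) : NoDup L ->
  (forall x y, In x L -> In y L -> z x = z y -> x = y) ->
  (forall k, (k < length L)%nat -> csumf L (fun x => c x * z x ^ k)%C = 0%C) ->
  forall x, In x L -> c x = 0%C.
Proof.
  revert c. induction L as [|a L IH]; intros c Hnd Hz Hs x Hx; [destruct Hx|].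
  inversion Hnd as [|? ? Ha HndL]; subst.
  assert (Hsub : forall y, In y L -> (c y * (z y - z a))%C = 0%C).
  { apply IH; [assumption | intros; apply Hz; auto; now right |].
    intros k Hk. simpl in Hk.
    pose proof (Hs (S k) ltac:(simpl; lia)) as E1. pose proof (Hs k ltac:(simpl; lia)) as E0.
    rewrite csumf_cons in E1, E0. simpl Cpow in E1.
    rewrite (csumf_ext L _ (fun x => c x * (z x * z x ^ k) - z a * (c x * z x ^ k))%C)
      by (intros; ring).
    rewrite csumf_minus, csumf_scal.
    set (S1 := csumf L (fun x => c x * (z x * z x ^ k))%C) in *.
    set (S0 := csumf L (fun x => c x * z x ^ k)%C) in *.
    transitivity ((c a * (z a * z a ^ k) + S1) - z a * (c a * z a ^ k + S0))%C; [ring|].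
    rewrite E1, E0. ring. }
  assert (HL : forall y, In y L -> c y = 0%C).
  { intros y Hy. destruct (Cmult_eq0 _ _ (Hsub y Hy)) as [|Hza]; [assumption|].
    exfalso. assert (y = a) as -> by (apply Hz; [now right | now left |];
      rewrite <- (Cplus_0_l (z a)), <- Hza; ring).
    contradiction. }
  destruct Hx as [<-|Hx]; [|auto].
  specialize (Hs 0%nat ltac:(simpl; lia)). rewrite csumf_cons, csumf_zero in Hs.
  - simpl in Hs. rewrite <- Hs. ring.
  - intros y Hy. rewrite HL by assumption. ring.
Qed.

Definition rsuml {X : Type} (L : list X) (g : X -> R) : R :=
  fold_right (fun x acc => g x + acc) 0 L.

Lemma rsuml_nonneg {X : Type} (L : list X) (g : X -> R) :
  (forall y, In y L -> 0 <= g y) -> 0 <= rsuml L g.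
Proof.
  induction L as [|a L IH]; intros Hg; simpl; [lra|].
  pose proof (Hg a (or_introl eq_refl)). pose proof (IH ltac:(intros; apply Hg; now right)). lra.
Qed.

Lemma rsuml_ge_term {X : Type} (L : list X) (g : X -> R) (x : X) :
  (forall y, In y L -> 0 <= g y) -> In x L -> g x <= rsuml L g.
Proof.
  induction L as [|a L IH]; intros Hg Hx; [destruct Hx|]. simpl.
  pose proof (rsuml_nonneg L g ltac:(intros; apply Hg; now right)).
  destruct Hx as [<-|Hx]; [lra|].
  pose proof (Hg a (or_introl eq_refl)). pose proof (IH ltac:(intros; apply Hg; now right) Hx). lra.
Qed.

Lemma cos_neq1 (x : R) : 0 < x < 2 * PI -> cos x <> 1.
Proof.
  intros [H1 H2] E. replace x with (2 * (x / 2)) in E by field. rewrite cos_2a_sin in E.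
  assert (0 < sin (x / 2)) by (apply sin_gt_0; lra). nra.
Qed.

Lemma cexpi_inj_small (a b : R) : Rabs (a - b) < 2 * PI -> cexpi a = cexpi b -> a = b.
Proof.
  intros H E. unfold cexpi in E. injection E as Ec Es.
  assert (Hc : cos (a - b) = 1).
  { rewrite cos_minus, Ec, Es. pose proof (sin2_cos2 b) as Hb. unfold Rsqr in Hb. lra. }
  destruct (Rtotal_order a b) as [Hlt|[Heq|Hgt]]; [exfalso| exact Heq |exfalso].
  - rewrite <- cos_neg, Ropp_minus_distr in Hc. apply (cos_neq1 (b - a)); [|exact Hc].
    rewrite Rabs_left in H by lra. lra.
  - apply (cos_neq1 (a - b)); [|exact Hc]. rewrite Rabs_right in H by lra. lra.
Qed.

Lemma exp_sum_coef_zero_grid {X : Type} (L : list X) (lam : X -> R) (beta : X -> C) (t0 d : R) :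
  NoDup L ->
  (forall x y, In x L -> In y L -> cexpi (d * lam x) = cexpi (d * lam y) -> x = y) ->
  (forall k, (k < length L)%nat ->
     csumf L (fun x => beta x * cexpi ((t0 + INR k * d) * lam x))%C = 0%C) ->
  forall x, In x L -> beta x = 0%C.
Proof.
  intros Hnd Hinj Hs x Hx.
  assert (Hc : (beta x * cexpi (t0 * lam x))%C = 0%C).
  { apply (vandermonde_coef_zero L (fun y => cexpi (d * lam y))
             (fun y => beta y * cexpi (t0 * lam y))%C); try assumption.
    intros k Hk. rewrite <- (Hs k Hk). apply csumf_ext. intros y _.
    rewrite cexpi_pow, <- Cmult_assoc, <- cexpi_add. do 2 f_equal. ring. }
  destruct (Cmult_eq0 _ _ Hc) as [|Hz]; [assumption|]. exfalso. exact (cexpi_neq0 _ Hz).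
Qed.

Lemma Rmult_le_of_le_div (a b c : R) : 0 < c -> a <= b / c -> a * c <= b.
Proof.
  intros Hc Hab. apply (Rmult_le_compat_r c) in Hab; [|lra].
  unfold Rdiv in Hab. now rewrite Rmult_assoc, Rinv_l, Rmult_1_r in Hab by lra.
Qed.

Lemma exp_sum_coef_zero {X : Type} (L : list X) (lam : X -> R) (beta : X -> C) (T : R) :
  NoDup L -> 0 < T ->
  (forall x y, In x L -> In y L -> lam x = lam y -> x = y) ->
  (forall t, 0 < t < T -> csumf L (fun x => beta x * cexpi (t * lam x))%C = 0%C) ->
  forall x, In x L -> beta x = 0%C.
Proof.
  intros Hnd HT Hinj Hs.
  set (S := rsuml L (fun x => Rabs (lam x))). set (m := INR (length L)).
  assert (Hbound : forall x, In x L -> Rabs (lam x) <= S).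
  { intros x Hx. apply (rsuml_ge_term L (fun y => Rabs (lam y))); [|exact Hx].
    intros; apply Rabs_pos. }
  assert (HS : 0 <= S) by (apply rsuml_nonneg; intros; apply Rabs_pos).
  assert (Hm : 0 <= m) by apply pos_INR.
  pose proof PI_RGT_0 as Hpi.
  (* d keeps |d (lam x - lam y)| < 2 PI, so that cexpi (d * lam) stays injective, and keeps the
     sample points T / 2 + k d, k < |L|, inside (0, T). *)
  set (d := Rmin (T / (2 * (m + 1))) (PI / (S + 1))).
  assert (Hd0 : 0 < d) by (apply Rmin_pos; apply Rdiv_lt_0_compat; lra).
  assert (HdT : d * (2 * (m + 1)) <= T) by (apply Rmult_le_of_le_div; [lra | apply Rmin_l]).
  assert (HdS : d * (S + 1) <= PI) by (apply Rmult_le_of_le_div; [lra | apply Rmin_r]).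
  apply (exp_sum_coef_zero_grid L lam beta (T / 2) d Hnd).
  - intros x y Hx Hy E. apply Hinj; [assumption..|].
    apply cexpi_inj_small in E; [apply Rmult_eq_reg_l in E; lra|].
    rewrite <- Rmult_minus_distr_l, Rabs_mult, Rabs_right by lra.
    assert (Hdiff : Rabs (lam x - lam y) <= 2 * S).
    { unfold Rminus. eapply Rle_trans; [apply Rabs_triang|]. rewrite Rabs_Ropp.
      pose proof (Hbound x Hx). pose proof (Hbound y Hy). lra. }
    nra.
  - intros k Hk. apply Hs.
    assert (Hkm : INR k + 1 <= m) by (rewrite <- S_INR; apply le_INR; lia).
    pose proof (pos_INR k). nra.
Qed.

Definition freq (n : nat) (u : nat -> R) (E : list nat) : R :=
  rsum n (fun j => INR (nth j E 0%nat) * u j).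

Lemma freq_inj (n : nat) (u : nat -> R) (E E' : list nat) : Q_lin_indep n u ->
  length E = n -> length E' = n -> freq n u E = freq n u E' -> E = E'.
Proof.
  intros Hind HE HE' Heq.
  set (q j := inject_Z (Z.of_nat (nth j E 0%nat) - Z.of_nat (nth j E' 0%nat))).
  assert (Hq : forall j, Q2R (q j) = INR (nth j E 0%nat) - INR (nth j E' 0%nat)).
  { intros j. unfold q, Q2R, inject_Z. simpl. rewrite minus_IZR, <- !INR_IZR_INZ. field. }
  assert (Hsum : rsum n (fun j => Q2R (q j) * u j) = freq n u E - freq n u E').
  { unfold freq, rsum. induction (seq 0 n) as [|a l IH]; simpl; [ring|]. rewrite IH, Hq. ring. }
  rewrite Heq, Rminus_diag in Hsum.
  apply nth_ext with (d := 0%nat) (d' := 0%nat); [congruence|]. intros j Hj.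
  pose proof (Hind q Hsum j ltac:(lia)) as Hj0. apply Qeq_eqR in Hj0. rewrite Hq in Hj0.
  unfold Q2R in Hj0. simpl in Hj0. apply INR_eq. lra.
Qed.

Lemma cexpi_freq (t : R) (u : nat -> R) (E : list nat) (n : nat) :
  cprod n (fun j => cexpi (t * u j) ^ nth j E 0%nat)%C = cexpi (t * freq n u E).
Proof.
  unfold freq, rsum. rewrite cexpi_sum. apply cprodf_ext. intros j _.
  rewrite cexpi_pow. f_equal. ring.
Qed.

(* sbinom m e = (-1)^e * binomial m e, the coefficients of (1 - w)^m. *)
Fixpoint sbinom (m e : nat) : R :=
  match m with
  | O => if Nat.eqb e 0 then 1 else 0
  | S m' => sbinom m' e - (match e with O => 0 | S e' => sbinom m' e' end)
  end.

Lemma sbinom_above (m e : nat) : (m < e)%nat -> sbinom m e = 0.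
Proof.
  revert e; induction m; intros e H; destruct e; simpl; try lia; [reflexivity|].
  rewrite !IHm by lia. ring.
Qed.

Lemma sbinom_diag_neq0 (m : nat) : sbinom m m <> 0.
Proof.
  enough (E : sbinom m m = (-1) ^ m) by (rewrite E; apply pow_nonzero; lra).
  induction m; [reflexivity|]. cbn [sbinom]. rewrite IHm, sbinom_above by lia. simpl. ring.
Qed.

Lemma pow_one_minus (B m : nat) (w : C) : (m < B)%nat ->
  ((1 - w) ^ m)%C = csumf (seq 0 B) (fun e => sbinom m e * w ^ e)%C.
Proof.
  destruct B as [|B]; [lia|]. induction m as [|m IH]; intros Hm.
  - rewrite csumf_seq_first, csumf_zero; [simpl; ring|]. intros e _. simpl. ring.
  - set (shifted e := (sbinom m e * w ^ S e)%C).
    transitivity (csumf (seq 0 (S B)) (fun e => sbinom m e * w ^ e)%C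
                  - csumf (seq 0 (S B)) shifted)%C.
    { simpl Cpow. rewrite IH by lia. unfold shifted. simpl Cpow.
      rewrite (csumf_ext _ (fun e => sbinom m e * (w * w ^ e))%C
                             (fun e => w * (sbinom m e * w ^ e))%C) by (intros; ring).
      rewrite csumf_scal. ring. }
    transitivity (csumf (seq 0 (S B)) (fun e => sbinom m e * w ^ e)%C
                  - csumf (seq 0 (S B))
                      (fun e => RtoC (match e with O => 0 | S e' => sbinom m e' end) * w ^ e))%C.
    { f_equal. rewrite csumf_seq_last, csumf_seq_first.
      unfold shifted at 2. rewrite (sbinom_above m B) by lia. cbv beta iota.
      rewrite !Cmult_0_l, Cplus_0_l, Cplus_0_r. reflexivity. }
    rewrite <- csumf_minus. apply csumf_ext. intros e _. cbn [sbinom].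
    rewrite RtoC_minus. ring.
Qed.

Lemma psi_mul_pow (k B : nat) (z : R) : (k < B)%nat -> cos z <> 1 ->
  (psi k z * (1 - cexpi z) ^ B)%C = (cexpi (z / 2) * (1 - cexpi z) ^ (B - 1 - k))%C.
Proof.
  intros Hk Hz. pose proof (one_minus_cexpi_neq0 _ Hz) as HY. unfold psi.
  replace B with (S k + (B - 1 - k))%nat at 1 by lia.
  rewrite Cpow_add_r, Cpow_inv by exact HY. field. apply Cpow_nz, HY.
Qed.

Lemma box_nth_lt (n B : nat) (K : list nat) (j : nat) :
  In K (box n B) -> (j < n)%nat -> (nth j K 0 < B)%nat.
Proof. intros HK Hj. apply In_box in HK as [Hlen HB]. apply HB, nth_In. lia. Qed.

Definition Psi (n : nat) (u : nat -> R) (K : list nat) (t : R) : C :=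
  cprod n (fun j => psi (nth j K 0%nat) (t * u j)).

Definition binom_coef (n B : nat) (K E : list nat) : C :=
  cprod n (fun j => RtoC (sbinom (B - 1 - nth j K 0%nat) (nth j E 0%nat))).

Lemma Psi_mul_expand (n B : nat) (u : nat -> R) (K : list nat) (t : R) :
  In K (box n B) -> off_poles n t u ->
  (Psi n u K t * cprod n (fun j => (1 - cexpi (t * u j)) ^ B))%C
  = (cprod n (fun j => cexpi (t * u j / 2))
     * csumf (box n B) (fun E => binom_coef n B K E * cexpi (t * freq n u E)))%C.
Proof.
  intros HK Hu. unfold Psi. rewrite !cprod_cprodf, <- cprodf_mult.
  rewrite (cprodf_ext _ _ (fun j => cexpi (t * u j / 2)
                                    * (1 - cexpi (t * u j)) ^ (B - 1 - nth j K 0%nat))%C).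
  2: { intros j Hj. apply in_seq in Hj.
       apply psi_mul_pow; [apply (box_nth_lt n) | apply Hu]; (assumption || lia). }
  rewrite cprodf_mult. f_equal.
  rewrite (cprodf_ext _ _ (fun j => csumf (seq 0 B)
             (fun e => sbinom (B - 1 - nth j K 0%nat) e * cexpi (t * u j) ^ e))%C).
  2: { intros j Hj. apply in_seq in Hj. apply pow_one_minus.
       pose proof (box_nth_lt n B K j HK ltac:(lia)). lia. }
  rewrite cprodf_csumf. apply csumf_ext. intros E _.
  unfold binom_coef. rewrite <- cexpi_freq, !cprod_cprodf, <- cprodf_mult.
  apply cprodf_ext. intros j _. rewrite Nat.sub_0_r. reflexivity.
Qed.

Lemma msum_lt_pointwise (K K' : list nat) : length K = length K' ->
  (forall j, (nth j K' 0 <= nth j K 0)%nat) -> K' <> K -> (msum K' < msum K)%nat.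
Proof.
  revert K'; induction K as [|a K IH]; intros K' Hlen Hle Hne;
    destruct K' as [|b K']; simpl in *; try lia; [congruence|].
  pose proof (Hle 0%nat) as H0; simpl in H0.
  assert (Hle' : forall j, (nth j K' 0 <= nth j K 0)%nat) by (intros j; apply (Hle (S j))).
  destruct (list_eq_dec Nat.eq_dec K' K) as [->|HneK].
  - assert (b <> a) by congruence. lia.
  - specialize (IH K' ltac:(lia) Hle' HneK). lia.
Qed.

Lemma exp_sum_of_Psi_sum (n B : nat) (u : nat -> R) (t : R) (alpha : list nat -> C) :
  off_poles n t u ->
  (cprod n (fun j => cexpi (t * u j / 2))
   * csumf (box n B) (fun E => csumf (box n B) (fun K => alpha K * binom_coef n B K E)
                               * cexpi (t * freq n u E)))%C
  = (csumf (box n B) (fun K => alpha K * Psi n u K t)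
     * cprod n (fun j => (1 - cexpi (t * u j)) ^ B))%C.
Proof.
  intros Hu. set (V := cprod n (fun j => cexpi (t * u j / 2))). symmetry.
  transitivity (csumf (box n B) (fun K => csumf (box n B) (fun E =>
                  V * (alpha K * binom_coef n B K E) * cexpi (t * freq n u E))))%C.
  { rewrite Cmult_comm, <- csumf_scal. apply csumf_ext. intros K HK.
    transitivity (alpha K * (Psi n u K t * cprod n (fun j => (1 - cexpi (t * u j)) ^ B)))%C;
      [ring|].
    rewrite Psi_mul_expand by assumption. fold V. rewrite <- !csumf_scal.
    apply csumf_ext. intros; ring. }
  rewrite csumf_swap, <- csumf_scal. apply csumf_ext. intros E _.
  rewrite (Cmult_comm (csumf _ _) (cexpi _)), <- !csumf_scal. apply csumf_ext. intros; ring.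
Qed.

Definition box_compl (B : nat) (K : list nat) : list nat := map (fun k => B - 1 - k)%nat K.

Lemma In_box_compl (n B : nat) (K : list nat) : In K (box n B) -> In (box_compl B K) (box n B).
Proof.
  intros HK. apply In_box in HK as [Hlen HB]. apply In_box. unfold box_compl. split.
  - now rewrite length_map.
  - intros x Hx. apply in_map_iff in Hx as [y [<- Hy]]. specialize (HB y Hy). lia.
Qed.

Lemma nth_box_compl (n B : nat) (K : list nat) (j : nat) : In K (box n B) -> (j < n)%nat ->
  nth j (box_compl B K) 0%nat = (B - 1 - nth j K 0)%nat.
Proof.
  intros HK Hj. apply In_box in HK as [Hlen _]. unfold box_compl.
  rewrite nth_indep with (d' := ((fun k => B - 1 - k) 0)%nat) by (rewrite length_map; lia).
  apply map_nth.
Qed.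

Lemma Psi_coef_zero (n B : nat) (u : nat -> R) (T : R) (alpha : list nat -> C) :
  Q_lin_indep n u -> 0 < T -> (forall t, 0 < t < T -> off_poles n t u) ->
  (forall t, 0 < t < T -> csumf (box n B) (fun K => alpha K * Psi n u K t)%C = 0%C) ->
  forall K, In K (box n B) -> alpha K = 0%C.
Proof.
  intros Hind HT Hpoles Hvan.
  assert (Hbeta : forall E, In E (box n B) ->
                    csumf (box n B) (fun K => alpha K * binom_coef n B K E)%C = 0%C).
  { apply (exp_sum_coef_zero (box n B) (freq n u) _ T (NoDup_box n B) HT).
    - intros E E' HE HE'. apply In_box in HE as [HE _], HE' as [HE' _]. now apply freq_inj.
    - intros t Ht. pose proof (exp_sum_of_Psi_sum n B u t alpha (Hpoles t Ht)) as E.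
      rewrite Hvan, Cmult_0_l in E by assumption.
      destruct (Cmult_eq0 _ _ E) as [HV|]; [|assumption]. exfalso. revert HV.
      apply cprodf_neq0. intros; apply cexpi_neq0. }
  (* binom_coef n B K (box_compl B K') <> 0 forces K' <= K pointwise. *)
  apply (triangular_coef_zero (box n B) alpha (fun K K' => binom_coef n B K (box_compl B K'))
           msum (NoDup_box n B)).
  - intros K' HK'. apply Hbeta, (In_box_compl n), HK'.
  - intros K HK. apply cprodf_neq0. intros j Hj. apply in_seq in Hj.
    rewrite (nth_box_compl n) by (assumption || lia).
    intros E. injection E as E. exact (sbinom_diag_neq0 _ E).
  - intros K K' HK HK' Hne Hnz. pose proof HK as HK0. pose proof HK' as HK0'.
    apply In_box in HK0 as [Hlen _], HK0' as [Hlen' _].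
    apply msum_lt_pointwise; [congruence| |assumption]. intros j.
    destruct (Nat.lt_ge_cases j n) as [Hj|Hj]; [|rewrite !nth_overflow by lia; lia].
    destruct (Nat.le_gt_cases (nth j K' 0%nat) (nth j K 0%nat)) as [|Hgt]; [assumption|]. exfalso.
    apply Hnz, (cprodf_eq0 _ _ j); [apply in_seq; lia|].
    pose proof (box_nth_lt n B K j HK Hj). pose proof (box_nth_lt n B K' j HK' Hj).
    rewrite (nth_box_compl n), sbinom_above by (assumption || lia). reflexivity.
Qed.

Lemma msum_box (n B : nat) (K : list nat) : In K (box n B) -> (msum K <= n * B)%nat.
Proof.
  intros HK. apply In_box in HK as [<- HB].
  induction K as [|a K IH]; simpl; [lia|].
  pose proof (HB a (or_introl eq_refl)). pose proof (IH ltac:(intros; apply HB; now right)). lia.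
Qed.

Lemma In_le_msum (r : list nat) (x : nat) : In x r -> (x <= msum r)%nat.
Proof.
  induction r as [|a r IH]; simpl; [intros []|].
  intros [->|Hx]; [|specialize (IH Hx)]; lia.
Qed.

Definition gam_coef (n : nat) (r K : list nat) : C :=
  cprod n (fun j => RtoC (gam (nth j r 0%nat) (nth j K 0%nat))).

Lemma prod_psi_comb_expand (n B : nat) (u : nat -> R) (r : list nat) (t : R) :
  cprod n (fun j => psi_comb B (nth j r 0%nat) (t * u j))
  = csumf (box n B) (fun K => gam_coef n r K * Psi n u K t)%C.
Proof.
  rewrite cprod_cprodf. unfold psi_comb.
  rewrite (cprodf_csumf B (fun j k => gam (nth j r 0%nat) k * psi k (t * u j))%C n 0).
  apply csumf_ext. intros K _. unfold gam_coef, Psi. rewrite !cprod_cprodf, <- cprodf_mult.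
  apply cprodf_ext. intros j _. rewrite Nat.sub_0_r. reflexivity.
Qed.

Lemma prod_psi_comb_coef_zero (n B : nat) (u : nat -> R) (T : R)
    (L : list (list nat)) (d : list nat -> C) :
  Q_lin_indep n u -> 0 < T -> (forall t, 0 < t < T -> off_poles n t u) ->
  NoDup L -> (forall r, In r L -> In r (box n B)) ->
  (forall t, 0 < t < T ->
     csumf L (fun r => d r * cprod n (fun j => psi_comb B (nth j r 0%nat) (t * u j)))%C = 0%C) ->
  forall r, In r L -> d r = 0%C.
Proof.
  intros Hind HT Hpoles Hnd HL Hvan.
  assert (HK : forall K, In K (box n B) -> csumf L (fun r => d r * gam_coef n r K)%C = 0%C).
  { apply (Psi_coef_zero n B u T _ Hind HT Hpoles). intros t Ht. rewrite <- (Hvan t Ht).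
    rewrite (csumf_ext L _ (fun r => csumf (box n B)
                                        (fun K => d r * gam_coef n r K * Psi n u K t)))%C.
    2: { intros r _. rewrite prod_psi_comb_expand, <- csumf_scal. apply csumf_ext. intros; ring. }
    rewrite csumf_swap. apply csumf_ext. intros K _.
    rewrite Cmult_comm, <- csumf_scal. apply csumf_ext. intros; ring. }
  (* gam_coef n r' r <> 0 forces r <= r' pointwise, and msum is at most n * B on box n B. *)
  apply (triangular_coef_zero L d (gam_coef n) (fun r => n * B - msum r)%nat Hnd).
  - intros r Hr. apply HK, HL, Hr.
  - intros r Hr. apply cprodf_neq0. intros j _. rewrite gam_diag.
    intros E. injection E as E. exact (INR_fact_neq_0 _ E).
  - intros r r' Hr Hr' Hne Hnz.
    pose proof (msum_box n B r' (HL r' Hr')) as Hbound.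
    pose proof (HL r Hr) as Hbox. pose proof (HL r' Hr') as Hbox'.
    apply In_box in Hbox as [Hlen _], Hbox' as [Hlen' _].
    enough (msum r < msum r')%nat by lia.
    apply msum_lt_pointwise; [congruence| |congruence]. intros j.
    destruct (Nat.lt_ge_cases j n) as [Hj|Hj]; [|rewrite !nth_overflow by lia; lia].
    destruct (Nat.le_gt_cases (nth j r 0%nat) (nth j r' 0%nat)) as [|Hgt]; [assumption|].
    exfalso. apply Hnz, (cprodf_eq0 _ _ j); [apply in_seq; lia|].
    rewrite gam_above by exact Hgt. reflexivity.
Qed.

Lemma small_times (n : nat) (u : nat -> R) : (forall j, (j < n)%nat -> 0 < u j) ->
  exists T, 0 < T /\ forall t, 0 < t < T -> forall j, (j < n)%nat -> 0 < t * u j < 2 * PI.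
Proof.
  intros Hpos. set (S := rsum n u).
  assert (HS : forall j, (j < n)%nat -> u j <= S).
  { intros j Hj. apply (rsuml_ge_term (seq 0 n) u); [|apply in_seq; lia].
    intros y Hy. apply in_seq in Hy. apply Rlt_le, Hpos. lia. }
  assert (HS0 : 0 <= S).
  { apply (rsuml_nonneg (seq 0 n) u). intros y Hy. apply in_seq in Hy. apply Rlt_le, Hpos. lia. }
  pose proof PI_RGT_0 as Hpi.
  exists (2 * PI / (1 + S)). split; [apply Rdiv_lt_0_compat; lra|].
  intros t [Ht0 HtT] j Hj. pose proof (Hpos j Hj). pose proof (HS j Hj).
  apply (Rmult_lt_compat_r (1 + S)) in HtT; [|lra].
  unfold Rdiv in HtT. rewrite Rmult_assoc, Rinv_l in HtT by lra. split; nra.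
Qed.

Lemma admissible_of_small (n : nat) (u : nat -> R) (t : R) :
  0 < t -> (forall j, (j < n)%nat -> 0 < t * u j < 2 * PI) -> admissible_t n u t.
Proof.
  intros Ht Hsmall. split; [lra|].
  intros j Hj k E. specialize (Hsmall j Hj). rewrite E in Hsmall. pose proof PI_RGT_0 as Hpi.
  assert (0 < IZR k < 1) as [Hk0 Hk1] by nra.
  apply lt_0_IZR in Hk0. apply lt_IZR in Hk1. lia.
Qed.

Lemma gterm_coef_zero (n N : nat) (u : nat -> R) (d : list nat -> C) :
  (forall j, (j < n)%nat -> 0 < u j) -> Q_lin_indep n u ->
  (forall t, admissible_t n u t -> csumf (mindices n N) (fun r => d r * gterm n u r t)%C = 0%C) ->
  forall r, In r (mindices n N) -> d r = 0%C.
Proof.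
  intros Hpos Hind Hvan. destruct (small_times n u Hpos) as [T [HT Hsmall]].
  assert (Hpoles : forall t, 0 < t < T -> off_poles n t u)
    by (intros t Ht j Hj; apply cos_neq1, Hsmall; assumption).
  assert (Hbound : forall r x, In r (mindices n N) -> In x r -> (x < S N)%nat).
  { intros r x Hr Hx. apply In_mindices in Hr as [_ Hsum]. pose proof (In_le_msum r x Hx). lia. }
  apply (prod_psi_comb_coef_zero n (S N) u T _ d Hind HT Hpoles (NoDup_mindices n N)).
  - intros r Hr. apply In_box. split; [now apply In_mindices in Hr as [Hlen _]|].
    intros x Hx. exact (Hbound r x Hr Hx).
  - intros t Ht. rewrite <- (Hvan t (admissible_of_small n u t (proj1 Ht) (Hsmall t Ht))).
    apply csumf_ext. intros r Hr.
    rewrite (gterm_eq_prod_psi_comb n u r t (S N)); [reflexivity | | lra | apply Hpoles, Ht |].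
    + now apply In_mindices in Hr as [Hlen _].
    + intros x Hx. exact (Hbound r x Hr Hx).
Qed.

Lemma Vcoef_sub (n : nat) (u : nat -> R) (c c' : list nat -> nat -> C) (s : nat) (t : R) :
  (Vcoef n u c s t - Vcoef n u c' s t)%C
  = csumf (mindices n (S s)) (fun r =>
      (if (1 <=? msum r) && (2 * msum r <=? s + 2)
       then c r (s + 2 - 2 * msum r)%nat - c' r (s + 2 - 2 * msum r)%nat
       else 0) * gterm n u r t)%C.
Proof.
  unfold Vcoef. change (csum (map ?f ?L)) with (csumf L f). rewrite <- csumf_minus.
  apply csumf_ext. intros r _. destruct (_ && _); ring.
Qed.

Theorem theorem3 (n : nat) (u : nat -> R)
  (hpos : forall j, (j < n)%nat -> 0 < u j)
  (hind : Q_lin_indep n u)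
  (c c' : list nat -> nat -> C) (l : nat)
  (hV : forall s, (s <= l)%nat -> forall t, admissible_t n u t ->
          Vcoef n u c s t = Vcoef n u c' s t) :
  forall (r : list nat) (i : nat),
    length r = n -> (1 <= msum r)%nat ->
    (2 * msum r - 2 + i <= l)%nat ->
    c r i = c' r i.
Proof.
  intros r i Hlen Hr Hi.
  set (s := (2 * msum r - 2 + i)%nat) in Hi.
  set (d r' := if ((1 <=? msum r') && (2 * msum r' <=? s + 2))%nat
               then (c r' (s + 2 - 2 * msum r')%nat - c' r' (s + 2 - 2 * msum r')%nat)%C
               else 0%C).
  assert (Hd : d r = 0%C).
  { apply (gterm_coef_zero n (S s) u d hpos hind); [|apply In_mindices; split; [assumption | lia]].
    intros t Ht. transitivity (Vcoef n u c s t - Vcoef n u c' s t)%C.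
    - now rewrite Vcoef_sub.
    - rewrite (hV s Hi t Ht). ring. }
  unfold d in Hd.
  replace ((1 <=? msum r) && (2 * msum r <=? s + 2))%nat with true in Hd
    by (symmetry; apply andb_true_intro; split; apply Nat.leb_le; lia).
  replace (s + 2 - 2 * msum r)%nat with i in Hd by lia.
  rewrite <- (Cplus_0_l (c' r i)), <- Hd. ring.
Qed.
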